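(* Consider the optimization problem (P) defined in the context. Every optimal solution $(\boldsymbol\tau,\boldsymbol\varphi,\mathbf e)$ of (P) satisfies $\sum_{k=0}^{K}\tau_k=T$.
   Context: Parameters: integer $K\ge1$, $T>0$, $W>0$, $\zeta\in(0,1]$, $P_t>0$, $I_p>0$, and for $k=1,\dots,K$: $h_k>0$, $f_k>0$, $\gamma_k>0$, $B_k^b>0$. Variables: $\boldsymbol\tau=(\tau_0,\tau_1,\dots,\tau_K)$, $\boldsymbol\varphi=(\varphi_1,\dots,\varphi_K)$, $\mathbf e=(e_1,\dots,e_K)$. Rate of node $k$: $R_k(\tau_k,\varphi_k,e_k)=\varphi_k W\log_2(1+\frac{e_k}{\varphi_k}\gamma_k)+(\tau_k-\varphi_k)B_k^b$ if $\varphi_k>0$, and $R_k=\tau_kB_k^b$ if $\varphi_k=0$. Problem (P): maximize $R(\boldsymbol\tau,\boldsymbol\varphi,\mathbf e)=\min_{1\le k\le K}R_k(\tau_k,\varphi_k,e_k)$ subject to: $\sum_{k=0}^K\tau_k\le T$; $0\le\tau_0$; $0\le\varphi_k\le\tau_k\le T$ for $k=1,\dots,K$; $0\le e_k\le \zeta P_t h_k\sum_{i=0}^{k-1}\tau_i$ for $k=1,\dots,K$ (harvested-energy constraint); $e_k\le \frac{I_p}{f_k}\varphi_k$ for $k=1,\dots,K$ (interference constraint). *)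

From Stdlib Require Import Reals Lra List.
Import ListNotations.
Open Scope R_scope.

Definition log2 (x : R) : R := ln x / ln 2.

Definition rate (W gam Bb tauk phik ek : R) : R :=
  if Rlt_dec 0 phik
  then phik * W * log2 (1 + ek / phik * gam) + (tauk - phik) * Bb
  else tauk * Bb.

(* Objective: min over k = 1..K of R_k.  (The extra R_1 seed does not change the min.) *)
Definition objective (K : nat) (W : R) (gamma Bb : nat -> R)
  (tau phi e : nat -> R) : R :=
  fold_right Rmin (rate W (gamma 1%nat) (Bb 1%nat) (tau 1%nat) (phi 1%nat) (e 1%nat))
    (map (fun k => rate W (gamma k) (Bb k) (tau k) (phi k) (e k)) (seq 1 K)).

(* Feasible set of problem (P).  tau is indexed 0..K, phi and e 1..K.
   sum_f_R0 tau n = tau 0 + ... + tau n. *)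
Definition feasible (K : nat) (T zeta Pt Ip : R) (h f : nat -> R)
  (tau phi e : nat -> R) : Prop :=
  sum_f_R0 tau K <= T /\
  0 <= tau 0%nat /\
  (forall k : nat, (1 <= k <= K)%nat ->
     0 <= phi k /\ phi k <= tau k /\ tau k <= T /\
     0 <= e k /\
     e k <= zeta * Pt * h k * sum_f_R0 tau (k - 1) /\
     e k <= Ip / f k * phi k).

Definition optimal (K : nat) (T W zeta Pt Ip : R) (h f gamma Bb : nat -> R)
  (tau phi e : nat -> R) : Prop :=
  feasible K T zeta Pt Ip h f tau phi e /\
  forall tau' phi' e' : nat -> R,
    feasible K T zeta Pt Ip h f tau' phi' e' ->
    objective K W gamma Bb tau' phi' e' <= objective K W gamma Bb tau phi e.

(* If the time budget is not exhausted, hand the slack out equally to the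
   transmission slots tau_1, ..., tau_K.  The harvesting slot tau_0 and every
   partial sum of the taus only grow, so the energy and interference constraints
   stay satisfied, while each rate R_k grows by (slack / K) * B_k^b > 0.  The
   min-rate objective therefore strictly increases, contradicting optimality. *)

From Stdlib Require Import Reals Lra Lia List.
Open Scope R_scope.

Lemma Rmin_lt_compat x y x' y' : x < x' -> y < y' -> Rmin x y < Rmin x' y'.
Proof. unfold Rmin; destruct (Rle_dec x y), (Rle_dec x' y'); lra. Qed.

Lemma fold_right_Rmin_lt_compat {A : Type} (g g' : A -> R) a a' (l : list A) :
  a < a' -> (forall x, In x l -> g x < g' x) ->
  fold_right Rmin a (map g l) < fold_right Rmin a' (map g' l).
Proof.
  intros Ha Hg; induction l as [|x l IH]; simpl; [exact Ha|].
  apply Rmin_lt_compat.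
  - apply Hg; left; reflexivity.
  - apply IH; intros y Hy; apply Hg; right; exact Hy.
Qed.

Lemma term_le_sum_f_R0 (u : nat -> R) n k :
  (forall i, (i <= n)%nat -> 0 <= u i) -> (k <= n)%nat -> u k <= sum_f_R0 u n.
Proof.
  revert k; induction n as [|n IH]; intros k Hu Hk; simpl.
  - replace k with O by lia; lra.
  - assert (0 <= u (S n)) by (apply Hu; lia).
    destruct (Nat.eq_dec k (S n)) as [->|Hne].
    + assert (u O <= sum_f_R0 u n) by (apply IH; [intros; apply Hu|]; lia).
      assert (0 <= u O) by (apply Hu; lia).
      lra.
    + assert (u k <= sum_f_R0 u n) by (apply IH; [intros; apply Hu|]; lia).
      lra.
Qed.

Lemma rate_add_time W gam Bb t p e d :
  rate W gam Bb (t + d) p e = rate W gam Bb t p e + d * Bb.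
Proof. unfold rate; destruct (Rlt_dec 0 p); ring. Qed.

Definition raise_slots (tau : nat -> R) (d : R) (k : nat) : R :=
  match k with O => tau O | _ => tau k + d end.

Lemma raise_slots_S tau d k : raise_slots tau d (S k) = tau (S k) + d.
Proof. reflexivity. Qed.

Lemma raise_slots_ge tau d k : 0 <= d -> tau k <= raise_slots tau d k.
Proof. destruct k; simpl; lra. Qed.

Lemma sum_raise_slots tau d n :
  sum_f_R0 (raise_slots tau d) n = sum_f_R0 tau n + INR n * d.
Proof.
  induction n as [|n IH]; simpl; [ring|].
  rewrite IH; destruct n; simpl; ring.
Qed.

Section SlackRedistribution.

Variables (K : nat) (T zeta Pt Ip : R) (h f : nat -> R).
Hypothesis (Hzeta : 0 < zeta) (HPt : 0 < Pt).
Hypothesis (Hh : forall k, (1 <= k <= K)%nat -> 0 < h k).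

Lemma feasible_time_nonneg tau phi e :
  feasible K T zeta Pt Ip h f tau phi e -> forall i, (i <= K)%nat -> 0 <= tau i.
Proof.
  intros [_ [H0 Hk]] [|i] Hi; [exact H0|].
  destruct (Hk (S i)) as [? [? _]]; [lia|lra].
Qed.

Lemma feasible_raise_slots tau phi e d :
  feasible K T zeta Pt Ip h f tau phi e -> 0 <= d ->
  sum_f_R0 tau K + INR K * d <= T ->
  feasible K T zeta Pt Ip h f (raise_slots tau d) phi e.
Proof.
  intros Hfeas Hd Hbudget.
  pose proof (feasible_time_nonneg _ _ _ Hfeas) as Hnn.
  destruct Hfeas as [_ [H0 Hk]].
  assert (Hsum : sum_f_R0 (raise_slots tau d) K <= T)
    by (rewrite sum_raise_slots; exact Hbudget).
  split; [exact Hsum|split; [exact H0|]].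
  intros k Hk1; destruct (Hk k Hk1) as [Hp0 [Hpt [_ [He0 [Heh Hei]]]]].
  destruct k as [|k]; [lia|]; rewrite raise_slots_S.
  assert (Hle : tau (S k) + d <= sum_f_R0 (raise_slots tau d) K).
  { rewrite <- raise_slots_S; apply term_le_sum_f_R0; [|lia].
    intros i Hi; pose proof (Hnn i Hi); pose proof (raise_slots_ge tau d i Hd); lra. }
  assert (Hharvest : sum_f_R0 tau (S k - 1) <= sum_f_R0 (raise_slots tau d) (S k - 1))
    by (apply sum_Rle; intros; apply raise_slots_ge, Hd).
  assert (Hcoef : 0 <= zeta * Pt * h (S k))
    by (pose proof (Hh _ Hk1); apply Rmult_le_pos; [apply Rmult_le_pos|]; lra).
  repeat split; try lra.
  eapply Rle_trans; [exact Heh|]; apply Rmult_le_compat_l; assumption.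
Qed.

End SlackRedistribution.

Lemma objective_raise_slots_lt K W (gamma Bb : nat -> R) tau phi e d :
  (1 <= K)%nat -> (forall k, (1 <= k <= K)%nat -> 0 < Bb k) -> 0 < d ->
  objective K W gamma Bb tau phi e < objective K W gamma Bb (raise_slots tau d) phi e.
Proof.
  intros HK HBb Hd; unfold objective.
  apply fold_right_Rmin_lt_compat.
  - rewrite raise_slots_S, rate_add_time.
    pose proof (HBb 1%nat ltac:(lia)); nra.
  - intros k Hk; apply in_seq in Hk.
    destruct k as [|k]; [lia|]; rewrite raise_slots_S, rate_add_time.
    pose proof (HBb (S k) ltac:(lia)); nra.
Qed.

Theorem proposition1 (K : nat) (T W zeta Pt Ip : R) (h f gamma Bb : nat -> R)
  (HK : (1 <= K)%nat) (HT : 0 < T) (HW : 0 < W)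
  (Hzeta : 0 < zeta <= 1) (HPt : 0 < Pt) (HIp : 0 < Ip)
  (Hh : forall k, (1 <= k <= K)%nat -> 0 < h k)
  (Hf : forall k, (1 <= k <= K)%nat -> 0 < f k)
  (Hgamma : forall k, (1 <= k <= K)%nat -> 0 < gamma k)
  (HBb : forall k, (1 <= k <= K)%nat -> 0 < Bb k)
  (tau phi e : nat -> R) :
  optimal K T W zeta Pt Ip h f gamma Bb tau phi e ->
  sum_f_R0 tau K = T.
Proof.
  intros [Hfeas Hopt].
  destruct (Rle_lt_or_eq_dec _ _ (proj1 Hfeas)) as [Hslack|]; [exfalso|assumption].
  assert (HKpos : 1 <= INR K) by (apply (le_INR 1); lia).
  set (d := (T - sum_f_R0 tau K) / INR K).
  assert (Hd : 0 < d) by (apply Rdiv_lt_0_compat; lra).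
  assert (Hbudget : sum_f_R0 tau K + INR K * d <= T) by (unfold d; field_simplify; lra).
  pose proof (feasible_raise_slots K T zeta Pt Ip h f (proj1 Hzeta) HPt Hh
                tau phi e d Hfeas (Rlt_le _ _ Hd) Hbudget) as Hfeas'.
  pose proof (Hopt _ _ _ Hfeas').
  pose proof (objective_raise_slots_lt K W gamma Bb tau phi e d HK HBb Hd).
  lra.
Qed.
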